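(* Let $\kappa,\lambda$ be cardinals. If a locally convex space $E$ is $(\kappa,\lambda)_p$-equiconvergent, then the bornology of $E$ is $(\kappa,\lambda)$-tall.
   Context: A topological space $X$ is $(\kappa,\lambda)_p$-equiconvergent at a point $x$ if for every indexed family $\{x_\alpha\}_{\alpha\in\kappa}$ of sequences $x_\alpha\in X^\omega$ converging to $x$ there exists $\Lambda\subseteq\kappa$ with $|\Lambda|=\lambda$ such that for every neighborhood $O_x$ of $x$ there is $n\in\omega$ for which the set $\{\alpha\in\Lambda: x_\alpha(n)\notin O_x\}$ is finite; $X$ is $(\kappa,\lambda)_p$-equiconvergent if it is so at every point. A subset $B$ of a topological vector space is bounded if for every neighborhood $U$ of zero there is $n\in\mathbb N$ with $B\subseteq nU$. The bornology of $E$ is $(\kappa,\lambda)$-tall if every subset $A\subseteq E$ of cardinality $\kappa$ contains a bounded subset $B\subseteq A$ of cardinality $\lambda$. *)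

From HB Require Import structures.
From mathcomp Require Import all_boot all_order all_algebra.
From mathcomp Require Import all_classical all_reals all_analysis.
Set Implicit Arguments. Unset Strict Implicit. Unset Printing Implicit Defensive.
Import Order.TTheory GRing.Theory Num.Theory.
Local Open Scope classical_set_scope.
Local Open Scope ring_scope.

(* Cardinals are represented by index types: the cardinal kappa is the
   cardinality of a type K, and "|A| = kappa" is  A #= [set: K]. *)

Definition equiconvergent_at (K L : Type) (X : topologicalType) (x : X) : Prop :=
  forall s : K -> (nat -> X),
    (forall a, s a @ \oo --> x) ->
    exists Lam : set K,
      (Lam #= [set: L])%card /\
      forall O : set X, nbhs x O ->
        exists n : nat, finite_set [set a | Lam a /\ ~ O (s a n)].

Definition equiconvergent (K L : Type) (X : topologicalType) : Prop :=
  forall x : X, equiconvergent_at K L x.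

Definition tvs_bounded (R : realType) (E : tvsType R) (B : set E) : Prop :=
  forall U : set E, nbhs (0 : E) U ->
    exists n : nat, (0 < n)%N /\ B `<=` [set (n%:R : R) *: u | u in U].

Definition bornology_tall (K L : Type) (R : realType) (E : tvsType R) : Prop :=
  forall A : set E, (A #= [set: K])%card ->
    exists B : set E, B `<=` A /\ (B #= [set: L])%card /\ tvs_bounded B.

From HB Require Import structures.
From mathcomp Require Import all_boot all_order all_algebra.
From mathcomp Require Import all_classical all_reals all_analysis.
Set Implicit Arguments. Unset Strict Implicit. Unset Printing Implicit Defensive.
Import Order.TTheory GRing.Theory Num.Theory.
Local Open Scope classical_set_scope.
Local Open Scope ring_scope.

(* Index a set A of cardinality kappa injectively by K and feed the null
   sequences n |-> a / (n + 1), a in A, to equiconvergence at 0.  The resulting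
   lambda-sized family B satisfies: for every 0-neighbourhood O there is n with
   B / (n + 1) inside O up to finitely many points.  Such a B is bounded: split
   a 0-neighbourhood U as P * Q by continuity of scaling at (0, 0), take n for Q,
   and choose N so large that (n + 1) / (N + 1) lies in P and the finitely many
   exceptional points of B / (N + 1) lie in U; then B / (N + 1) lies in U. *)

Lemma card_eq_setT_inj (T K : Type) (A : set T) :
  (A #= [set: K])%card -> exists2 h : K -> T, injective h & range h `<=` A.
Proof.
move=> /card_bijP[f [g fg gf]].
pose h (k : K) : T := val (g (@SigSub _ _ _ k (mem_set (I : [set: K] k)))).
exists h; last by move=> _ [k _ <-]; exact: set_mem (valP _).
by move=> k1 k2 /val_inj /(congr1 f); rewrite !gf => -[].
Qed.

Section harmonic_scaling.
Variables (R : realType) (E : topologicalLmodType R).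

Lemma cvg_harmonic_scale (x : E) :
  (fun N : nat => N.+1%:R^-1 *: x) @ \oo --> (0 : E).
Proof.
have := @continuous2_cvg nat R^o E E \oo _ (fun N : nat => N.+1%:R^-1) (cst x)
  (fun t v => t *: v) 0 x (scale_continuous ((0 : R^o), x))
  (@cvg_harmonic R) (cvg_cst x).
by rewrite scale0r; apply; exact: eventually_filter.
Qed.

Lemma near_harmonic_scale_finite (F : set E) (U : set E) :
  finite_set F -> nbhs 0 U ->
  \forall N \near \oo, forall x, F x -> U (N.+1%:R^-1 *: x).
Proof.
move=> /finite_fsetP[X ->] U0.
apply: filterS (@filter_bigI nat E X (fun x N => U (N.+1%:R^-1 *: x)) _
  eventually_filter (fun x _ => cvg_harmonic_scale x U0)).
by move=> N XN x /XN.
Qed.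

Lemma nbhs0_scale_split (U : set E) : nbhs 0 U ->
  exists2 P : set R, nbhs (0 : R^o) P &
  exists2 Q : set E, nbhs 0 Q & forall r x, P r -> Q x -> U (r *: x).
Proof.
move=> U0; have := scale_continuous ((0 : R^o), (0 : E)) U.
rewrite /= scale0r => /(_ U0) [[P Q]] /= [P0 Q0] PQ.
by exists P => //; exists Q => // r x Pr Qx; exact: (PQ (r, x)).
Qed.

End harmonic_scaling.

Lemma cofinite_shrink_tvs_bounded (R : realType) (E : tvsType R) (B : set E) :
  (forall O : set E, nbhs 0 O ->
    exists n : nat, finite_set [set x | B x /\ ~ O (n.+1%:R^-1 *: x)]) ->
  tvs_bounded B.
Proof.
move=> shrink U U0.
have [P P0 [Q Q0 PQU]] := nbhs0_scale_split U0.
have [n exceptions_fin] := shrink Q Q0.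
have ratio_small : \forall N \near \oo, P (N.+1%:R^-1 * n.+1%:R) :=
  cvg_harmonic_scale (n.+1%:R : R^o) P0.
have exceptions_small := near_harmonic_scale_finite exceptions_fin U0.
have [N [/= ratioN exceptionsN]] := filter_ex (filterI ratio_small exceptions_small).
exists N.+1; split => // x Bx.
exists (N.+1%:R^-1 *: x); last by rewrite scalerA mulfV ?scale1r // pnatr_eq0.
have [Qx|nQx] := pselect (Q (n.+1%:R^-1 *: x)); last exact: exceptionsN.
have := PQU _ _ ratioN Qx.
by rewrite scalerA mulfK // pnatr_eq0.
Qed.

Theorem proposition3p3 (K L : Type) (R : realType) (E : tvsType R) :
  equiconvergent K L E -> bornology_tall K L E.
Proof.
move=> equi A /card_eq_setT_inj[h h_inj hA].
have [Lam [LamL shrink]] := equi 0 (fun k n => n.+1%:R^-1 *: h k)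
  (fun k => cvg_harmonic_scale (h k)).
exists (h @` Lam); split; first by move=> _ [k _ <-]; apply: hA; exists k.
split.
  by rewrite (card_eql (inj_card_eq _)) // => ? ? _ _; exact: h_inj.
apply: cofinite_shrink_tvs_bounded => O O0.
have [n exceptions_fin] := shrink O O0.
exists n; apply: sub_finite_set (finite_image h exceptions_fin).
by move=> _ [[k Lk <-] nO]; exists k.
Qed.
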